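(* Let $(\alpha_n)_{n\in\mathbb{N}^+}$ be a sequence in $(0,1)$ converging to $\alpha$, with continued fraction expansions $\alpha_n=[0;a_{n1},a_{n2},\dots]$ and $\alpha=[0;a_1,a_2,\dots]$, and write $\alpha_n=[0;a_{n1},\dots,a_{ni},r_{ni}]$. Suppose that for some $i\in\mathbb{N}^+$ the numbers $a_{n1},\dots,a_{ni}$ ($n\in\mathbb{N}^+$) are bounded. If $(r_{ni})_n$ is not bounded away from $1$ or not bounded away from $\infty$, then $\alpha$ terminates, i.e. $\alpha=[0;a_1,\dots,a_j]$ for some $j\le i$. Moreover, if $a_{n1}\to\infty$ as $n\to\infty$, then $\alpha=0$.
   Context: Continued fraction conventions: $[a_0;a_1,\dots,a_n]$ denotes $a_0+1/(a_1+1/(a_2+\cdots+1/a_n))$ with $a_0\in\mathbb{Z}$, $a_k\in\mathbb{N}^+$ for $1\le k<n$, and last element $a_n>1$. Every real number is identified with its unique continued fraction; a terminating expansion is also written as $[a_0;a_1,\dots,a_n,0,0,\dots]$, with $[a_0;0,0,\dots]=a_0$. For $\alpha=[a_0;a_1,a_2,\dots]$ and $i\ge1$, $\alpha=[a_0;a_1,\dots,a_i,r_i]$ where $r_i:=a_{i+1}+[0;a_{i+2},a_{i+3},\dots]$. *)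

From HB Require Import structures.
From mathcomp Require Import all_boot all_order all_algebra.
From mathcomp Require Import all_classical all_reals all_analysis.
Set Implicit Arguments. Unset Strict Implicit. Unset Printing Implicit Defensive.
Import Order.TTheory GRing.Theory Num.Theory.
Local Open Scope ring_scope.

(* Gauss map T(x) = 1/x - floor(1/x); note 0^-1 = 0 in MathComp, so T(0) = 0. *)
Definition gauss {R : realType} (x : R) : R := x^-1 - (Num.truncn (x^-1))%:R.

(* k-th partial quotient a_k(x) (k >= 1) of x in [0,1]:
   a_k(x) = floor(1 / T^(k-1)(x)); it is 0 once the expansion has terminated,
   matching the convention [a_0;a_1,...,a_n,0,0,...]. *)
Definition cf_a {R : realType} (x : R) (k : nat) : nat :=
  Num.truncn ((iter k.-1 gauss x)^-1).

(* r_i(x) := a_{i+1} + [0; a_{i+2}, a_{i+3}, ...]  (and [0;a_{i+2},...] = T^(i+1) x) *)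
Definition cf_r {R : realType} (x : R) (i : nat) : R :=
  (cf_a x i.+1)%:R + iter i.+1 gauss x.

Definition cfeval {R : realType} (s : seq nat) : R :=
  foldr (fun a v => (a%:R + v)^-1) 0 s.

From HB Require Import structures.
From mathcomp Require Import all_boot all_order all_algebra.
From mathcomp Require Import all_classical all_reals all_analysis.
From mathcomp Require Import ring lra.
Import Order.TTheory GRing.Theory Num.Theory numFieldNormedType.Exports.
Local Open Scope classical_set_scope.
Local Open Scope ring_scope.

(* Write alpha_n = [0; a_n1, ..., a_ni + t_n] with t_n = T^i(alpha_n) in [0,1), T the Gauss map,
   so that r_ni = 1/t_n.  For a fixed string c of positive digits, t |-> [0; c_1, ..., c_i + t] is
   1-Lipschitz on [0,1]; hence alpha_n lies within min(t_n, 1 - t_n) of one of the finitely many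
   values obtained with t = 0 or t = 1 and digits at most B.  If r_ni is not bounded away from 1
   or from infinity, then t_n comes arbitrarily close to 1 or 0 for arbitrarily late n, so the
   limit alpha is one of these values, i.e. a continued fraction of length at most i.  For the
   second part, alpha_n <= 1/a_n1. *)

Set Implicit Arguments.
Unset Strict Implicit.
Unset Printing Implicit Defensive.

Section RealSequences.
Variable R : realFieldType.
Implicit Types (t e : R) (V : seq R).

Lemma approx_mem_seq V (a : R) :
  (forall e, 0 < e -> exists2 v, v \in V & `|a - v| < e) -> a \in V.
Proof.
elim: V => [|v V IHV] a_approx; first by have [] := a_approx 1 ltr01.
rewrite inE; have [//|a_neq_v] := eqVneq a v; apply: IHV => e e_gt0.
have d_gt0 : 0 < Num.min e `|a - v| by rewrite lt_min e_gt0 normr_gt0 subr_eq0.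
have [w] := a_approx _ d_gt0; rewrite inE lt_min => /orP[/eqP ->|w_V] /andP[lt_e lt_d].
  by rewrite ltxx in lt_d.
by exists w.
Qed.

Lemma cluster_mem_seq (u : nat -> R) (a : R) V : u n @[n --> \oo] --> a ->
  (forall N e, 0 < e -> exists2 n, (N < n)%N & exists2 v, v \in V & `|u n - v| < e) ->
  a \in V.
Proof.
move=> u_cvg u_near; apply: approx_mem_seq => e e_gt0.
have [N _ u_close] : \forall n \near \oo, `|a - u n| < e / 2.
  by apply: (cvgr_dist_lt _ _ u_cvg); lra.
have [|n /ltnW /u_close /= a_close [v v_V un_close]] := u_near N (e / 2); first by lra.
by exists v => //; have := ler_distD (u n) a v; lra.
Qed.

Lemma cofinal_gtr (f : nat -> R) : (forall M, exists2 n, (0 < n)%N & M < f n) ->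
  forall N M, exists2 n, (N < n)%N & M < f n.
Proof.
move=> f_unbdd; elim=> [|N IHN] M; first exact: f_unbdd.
have [n N_lt_n M_lt_fn] := IHN M.
have [N1_lt_n|n_le_N1] := ltnP N.+1 n; first by exists n.
have n_eq : n = N.+1 by apply/eqP; rewrite eqn_leq n_le_N1.
have [m N_lt_m] := IHN (Num.max M (f n)); rewrite gt_max => /andP[M_lt_fm fn_lt_fm].
exists m => //; rewrite ltn_neqAle N_lt_m andbT.
by apply: contraTneq fn_lt_fm => mE; rewrite -mE -n_eq ltxx.
Qed.

(* This includes t = 0, as 0^-1 = 0. *)
Lemma lt_of_ltVf t e : 0 <= t -> 0 < e -> e^-1 < t^-1 -> 0 < t < e.
Proof.
move=> t_ge0 e_gt0; have [->|t_neq0] := eqVneq t 0.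
  by rewrite invr0 invr_lt0 ltNge (ltW e_gt0).
have t_gt0 : 0 < t by rewrite lt_neqAle eq_sym t_neq0.
by rewrite ltf_pV2 ?posrE // t_gt0.
Qed.

Lemma dist_invf_le (p q : R) : 1 <= p -> 1 <= q -> `|p^-1 - q^-1| <= `|p - q|.
Proof.
move=> p_ge1 q_ge1.
have -> : p^-1 - q^-1 = (q - p) * (p^-1 * q^-1).
  by field; apply/andP; split; apply/negP => /eqP; lra.
rewrite normrM distrC ler_piMr // normrM !ger0_norm ?invr_ge0; try lra.
by rewrite -[1]mulr1 ler_pM ?invr_ge0 ?invf_le1 //; lra.
Qed.

Section Tails.
Variables (t r : nat -> R).
Hypothesis rE : forall n, r n = (t n)^-1.
Hypothesis t_itv : forall n, (0 < n)%N -> 0 <= t n < 1.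

Lemma tails_near_zero : ~ (exists M, forall n, (0 < n)%N -> r n <= M) ->
  forall N e, 0 < e -> exists2 n, (N < n)%N & 0 < t n < e.
Proof.
move=> r_unbdd N e e_gt0.
have r_large M : exists2 n, (0 < n)%N & M < r n.
  apply: contra_notP r_unbdd => r_small; exists M => n n_gt0.
  by rewrite leNgt; apply/negP => M_lt; apply: r_small; exists n.
have [n N_lt_n lt_rn] := cofinal_gtr r_large N e^-1.
exists n => //; apply: lt_of_ltVf => //; last by rewrite -rE.
by case/andP: (t_itv (leq_ltn_trans (leq0n N) N_lt_n)).
Qed.

Lemma tails_near_one :
  ~ (exists eps, 0 < eps /\ forall n, (0 < n)%N -> eps <= `|r n - 1|) ->
  forall N e, 0 < e -> exists2 n, (N < n)%N & 0 < t n /\ 1 - t n < e.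
Proof.
move=> r_near1 N e e_gt0.
have r_neq1 n : (0 < n)%N -> 0 < `|r n - 1|.
  move=> /t_itv /andP[t_ge0 t_lt1]; rewrite normr_gt0 subr_eq0 rE.
  have [->|t_neq0] := eqVneq (t n) 0; first by rewrite invr0 eq_sym oner_eq0.
  by rewrite gt_eqF // invf_gt1 // lt_neqAle eq_sym t_neq0.
have dist_large M : exists2 n, (0 < n)%N & M < `|r n - 1|^-1.
  apply: contra_notP r_near1 => dist_small.
  have M1_gt0 : 0 < 1 + `|M| by rewrite ltr_pwDl.
  exists (1 + `|M|)^-1; split=> [|n n_gt0]; first by rewrite invr_gt0.
  rewrite leNgt; apply/negP => dist_lt; apply: dist_small; exists n => //.
  have : 1 + `|M| < `|r n - 1|^-1.
    by rewrite -[1 + _]invrK ltf_pV2 ?posrE ?invr_gt0 ?r_neq1.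
  by have := ler_norm M; lra.
have [n N_lt_n lt_dist] := cofinal_gtr dist_large N (Num.min e 1)^-1.
have n_gt0 : (0 < n)%N := leq_ltn_trans (leq0n N) N_lt_n.
have /andP[t_ge0 t_lt1] := t_itv n_gt0.
have min_gt0 : 0 < Num.min e 1 by rewrite lt_min e_gt0 ltr01.
have /andP[_ dist_lt] := lt_of_ltVf (normr_ge0 _) min_gt0 lt_dist.
have t_gt0 : 0 < t n.
  rewrite lt_neqAle t_ge0 andbT; apply: contraTneq dist_lt => t0.
  by rewrite rE -t0 invr0 sub0r normrN normr1 lt_min ltxx andbF.
exists n => //; split=> //; move: dist_lt; rewrite lt_min => /andP[dist_lt _].
have rn_lt : (t n)^-1 - 1 < e by rewrite -rE (le_lt_trans (ler_norm _) dist_lt).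
have : t n * ((t n)^-1 - 1) < t n * e by rewrite ltr_pM2l.
by rewrite mulrBr mulfV ?gt_eqF // mulr1; nra.
Qed.

End Tails.

End RealSequences.

Fixpoint bounded_tuples (B k : nat) : seq (seq nat) :=
  if k is k'.+1 then [seq b :: c | b <- iota 1 B, c <- bounded_tuples B k'] else [:: [::]].

Lemma mem_bounded_tuples B k c :
  (c \in bounded_tuples B k) = (size c == k) && all (fun b => 0 < b <= B)%N c.
Proof.
elim: k c => [|k IHk] [|b c] //=.
  by apply/negbTE/allpairsP => -[[b c] [_ _]].
rewrite eqSS andbCA -IHk -[(0 < b <= B)%N](mem_iota 1 B b).
apply/allpairsP/andP => [[[b' c'] /= [b'_in c'_in [-> ->]]] | [b_in c_in]] //.
by exists (b, c).
Qed.

Section ContinuedFractions.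
Variable R : realType.
Implicit Types (x t : R) (c s : seq nat).

Lemma gauss_itv x : 0 <= x -> 0 <= gauss x < 1.
Proof.
move=> x_ge0; rewrite /gauss.
have /andP[trunc_le trunc_gt] : (Num.truncn x^-1)%:R <= x^-1 < (Num.truncn x^-1).+1%:R.
  by apply: truncn_itv; rewrite invr_ge0.
by rewrite -natr1 in trunc_gt; apply/andP; split; lra.
Qed.

Lemma iter_gauss_itv k x : 0 <= x < 1 -> 0 <= iter k gauss x < 1.
Proof.
move=> x_itv; elim: k => [|k IHk] //=.
by apply: gauss_itv; case/andP: IHk.
Qed.

Lemma iter_gauss0 k : iter k gauss (0 : R) = 0.
Proof. by elim: k => [|k IHk] //=; rewrite IHk /gauss invr0 truncn0 subr0. Qed.

Lemma cf_rE x i : cf_r x i = (iter i gauss x)^-1.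
Proof. by rewrite /cf_r /cf_a /= /gauss addrC subrK. Qed.

Lemma map_cf_a_iotaS x j :
  [seq cf_a x k | k <- iota 1 j.+1] = cf_a x 1 :: [seq cf_a (gauss x) k | k <- iota 1 j].
Proof.
rewrite /= (iotaDl 1 1) -map_comp; congr (_ :: _).
apply/eq_in_map => -[|k]; rewrite mem_iota // => _ /=.
by rewrite /cf_a /= -iterS iterSr.
Qed.

Lemma cf_a_gt0 x i k : 0 <= x < 1 -> 0 < iter i gauss x -> (1 <= k <= i)%N ->
  (0 < cf_a x k)%N.
Proof.
move=> x_itv iter_gt0 /andP[k_ge1 k_le_i].
have /andP[y_ge0 y_lt1] := iter_gauss_itv k.-1 x_itv.
have y_gt0 : 0 < iter k.-1 gauss x.
  rewrite lt_neqAle y_ge0 andbT; apply: contraTneq iter_gt0 => y0.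
  by rewrite -(subnK (leq_trans (leq_pred k) k_le_i)) iterD -y0 iter_gauss0 ltxx.
by rewrite /cf_a truncn_gt0 invf_ge1 // ltW.
Qed.

Definition cf_tail c t : R := foldr (fun a v => (a%:R + v)^-1) t c.

Lemma cfevalE s : cfeval s = cf_tail s 0.
Proof. by []. Qed.

Lemma cf_tail_digits k x : x = cf_tail [seq cf_a x j | j <- iota 1 k] (iter k gauss x).
Proof.
elim: k x => [|k IHk] x //.
rewrite map_cf_a_iotaS iterSr /= -IHk /cf_a /= /gauss.
by rewrite addrC subrK invrK.
Qed.

Lemma cf_tail_itv c t : all (fun b => 0 < b)%N c -> 0 <= t <= 1 -> 0 <= cf_tail c t <= 1.
Proof.
move=> c_gt0 t_itv; elim: c c_gt0 => [|b c IHc] //= /andP[b_gt0 /IHc /andP[v_ge0 v_le1]].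
have b_ge1 : 1 <= (b%:R : R) by rewrite ler1n.
by rewrite invr_ge0 invf_le1; lra.
Qed.

Lemma cf_tail_dist_le c t t' : all (fun b => 0 < b)%N c ->
  0 <= t <= 1 -> 0 <= t' <= 1 -> `|cf_tail c t - cf_tail c t'| <= `|t - t'|.
Proof.
move=> c_gt0 t_itv t'_itv; elim: c c_gt0 => [|b c IHc] //= /andP[b_gt0 c_gt0].
have b_ge1 : 1 <= (b%:R : R) by rewrite ler1n.
have /andP[u_ge0 _] := cf_tail_itv c_gt0 t_itv.
have /andP[v_ge0 _] := cf_tail_itv c_gt0 t'_itv.
apply: le_trans (IHc c_gt0); apply: le_trans (dist_invf_le _ _) _; try lra.
by rewrite opprD addrACA subrr add0r.
Qed.

Lemma cf_tail_rcons1 c b : cf_tail (rcons c b) 1 = cfeval (rcons c b.+1).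
Proof. by rewrite /cfeval /cf_tail !foldr_rcons addr0 natr1. Qed.

Lemma cfeval_digits s x : all (fun b => 0 < b)%N s -> x = cfeval s ->
  exists j, (j <= size s)%N /\ x = cfeval [seq cf_a x k | k <- iota 1 j].
Proof.
elim: s x => [|b s IHs] x; first by move=> _ ->; exists 0%N.
move=> /andP[b_gt0 s_gt0]; rewrite /= -/(cfeval s) => xE.
have /andP[y_ge0 y_le1] : 0 <= (cfeval s : R) <= 1.
  by rewrite cfevalE cf_tail_itv // lexx ler01.
have b_ge1 : 1 <= (b%:R : R) by rewrite ler1n.
have [y1|y_neq1] := eqVneq (cfeval s : R) 1.
  by exists 1%N; split; rewrite //= /cf_a /= xE y1 invrK natr1 natrK addr0.
have a1E : cf_a x 1 = b.
  by rewrite /cf_a /= xE invrK; apply: truncn_def; rewrite -natr1; lra.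
have gaussE : gauss x = cfeval s.
  by rewrite /gauss [Num.truncn _]a1E xE invrK addrC addKr.
have [j [j_le gaussE']] := IHs _ s_gt0 gaussE.
by exists j.+1; split; rewrite // map_cf_a_iotaS /= a1E -gaussE' gaussE -xE.
Qed.

Definition cf_end_values B i : seq R :=
  [seq cf_tail c 0 | c <- bounded_tuples B i] ++ [seq cf_tail c 1 | c <- bounded_tuples B i].

Lemma near_cf_end_values x B i : 0 <= x < 1 -> 0 < iter i gauss x ->
  (forall k, (1 <= k <= i)%N -> (cf_a x k <= B)%N) ->
  exists2 v, v \in cf_end_values B i &
    `|x - v| <= Num.min (iter i gauss x) (1 - iter i gauss x).
Proof.
move=> x_itv t_gt0 a_le.
set t := iter i gauss x; set c := [seq cf_a x k | k <- iota 1 i].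
have c_bdd : all (fun b => 0 < b <= B)%N c.
  apply/allP => b /mapP[k]; rewrite mem_iota add1n ltnS => k_in ->.
  by rewrite a_le // andbT (cf_a_gt0 x_itv t_gt0).
have c_pos : all (fun b => 0 < b)%N c by apply: sub_all c_bdd => b /andP[].
have c_mem : c \in bounded_tuples B i by rewrite mem_bounded_tuples size_map size_iota eqxx.
have /andP[t_ge0 t_lt1] := iter_gauss_itv i x_itv.
have t_itv : 0 <= t <= 1 by rewrite t_ge0 ltW.
have xE : x = cf_tail c t := cf_tail_digits i x.
have zero_itv : 0 <= (0 : R) <= 1 by rewrite lexx ler01.
have one_itv : 0 <= (1 : R) <= 1 by rewrite ler01 lexx.
have [t_le|t_gt] := leP t (1 - t).
- exists (cf_tail c 0); first by rewrite mem_cat; apply/orP; left; apply: map_f.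
  rewrite {1}xE; apply: le_trans (cf_tail_dist_le c_pos t_itv zero_itv) _.
  by rewrite subr0 ger0_norm.
- exists (cf_tail c 1); first by rewrite mem_cat; apply/orP; right; apply: map_f.
  rewrite {1}xE; apply: le_trans (cf_tail_dist_le c_pos t_itv one_itv) _.
  by rewrite distrC ger0_norm // subr_ge0 ltW.
Qed.

Lemma cf_end_values_terminate B i v : (0 < i)%N -> v \in cf_end_values B i ->
  exists j, (j <= i)%N /\ v = cfeval [seq cf_a v k | k <- iota 1 j].
Proof.
move=> i_gt0; rewrite mem_cat => /orP[] /mapP[c].
  rewrite mem_bounded_tuples => /andP[/eqP <- c_bdd] ->.
  by apply: (@cfeval_digits c) => //; apply: sub_all c_bdd => b /andP[].
case/lastP: c => [|c b].
  by rewrite mem_bounded_tuples => /andP[/eqP i0]; rewrite -i0 in i_gt0.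
rewrite mem_bounded_tuples size_rcons all_rcons => /andP[/eqP <- /andP[_ c_bdd]] ->.
rewrite cf_tail_rcons1 -(size_rcons c b.+1); apply: (@cfeval_digits (rcons c b.+1)) => //.
by rewrite all_rcons /=; apply: sub_all c_bdd => b' /andP[].
Qed.

Lemma le_invSn_of_cf_a1 x M : 0 < x -> (M.+1 <= cf_a x 1)%N -> x <= M.+1%:R^-1.
Proof.
move=> x_gt0; rewrite /cf_a /= truncn_ge_nat; last by rewrite invr_ge0 ltW.
by move=> M_le; rewrite -[x]invrK lef_pV2 ?posrE ?invr_gt0.
Qed.

Lemma cf_limit_terminates (alpha_ : nat -> R) alpha i B :
  (forall n, (0 < n)%N -> 0 < alpha_ n < 1) -> alpha_ n @[n --> \oo] --> alpha ->
  (0 < i)%N ->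
  (forall n, (0 < n)%N -> forall k, (1 <= k <= i)%N -> (cf_a (alpha_ n) k <= B)%N) ->
  (~ (exists eps : R, 0 < eps /\ forall n, (0 < n)%N -> eps <= `|cf_r (alpha_ n) i - 1|)
   \/ ~ (exists M : R, forall n, (0 < n)%N -> cf_r (alpha_ n) i <= M)) ->
  exists j, (j <= i)%N /\ alpha = cfeval [seq cf_a alpha k | k <- iota 1 j].
Proof.
move=> alpha_itv alpha_cvg i_gt0 a_le r_hyp.
pose t n := iter i gauss (alpha_ n).
have x_itv n : (0 < n)%N -> 0 <= alpha_ n < 1.
  by move=> /alpha_itv /andP[x_gt0 ->]; rewrite ltW.
have t_itv n : (0 < n)%N -> 0 <= t n < 1 by move=> /x_itv; apply: iter_gauss_itv.
have rE n : cf_r (alpha_ n) i = (t n)^-1 := cf_rE (alpha_ n) i.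
have t_near N e : 0 < e -> exists2 n, (N < n)%N &
    0 < t n /\ Num.min (t n) (1 - t n) < e.
  move=> e_gt0; case: r_hyp => [/(tails_near_one rE t_itv)|].
    by move=> /(_ N e e_gt0) [n N_lt_n [t_gt0 t_lt]]; exists n; rewrite ?gt_min ?t_lt ?orbT.
  move=> /(tails_near_zero rE t_itv) /(_ N e e_gt0) [n N_lt_n /andP[t_gt0 t_lt]].
  by exists n; rewrite ?gt_min ?t_lt.
apply: (cf_end_values_terminate (B := B)) => //.
apply: (cluster_mem_seq alpha_cvg) => N e /(t_near N) [n N_lt_n [t_gt0 t_lt]].
have n_gt0 : (0 < n)%N := leq_ltn_trans (leq0n N) N_lt_n.
have [v v_mem v_near] := near_cf_end_values (x_itv n n_gt0) t_gt0 (a_le n n_gt0).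
by exists n => //; exists v => //; apply: le_lt_trans t_lt.
Qed.

Lemma cf_limit_eq0 (alpha_ : nat -> R) alpha :
  (forall n, (0 < n)%N -> 0 < alpha_ n < 1) -> alpha_ n @[n --> \oo] --> alpha ->
  (forall M : nat, exists N : nat, forall n, (N <= n)%N -> (M <= cf_a (alpha_ n) 1)%N) ->
  alpha = 0.
Proof.
move=> alpha_itv alpha_cvg a1_large.
have alphaE : lim (alpha_ n @[n --> \oo]) = alpha := cvg_lim (@Rhausdorff R) alpha_cvg.
have alpha_ge0 : 0 <= alpha.
  rewrite -alphaE; apply: limr_ge; first exact: cvgP alpha_cvg.
  near=> n; have n_gt0 : (0 < n)%N by near: n; exact: nbhs_infty_gt.
  by case/andP: (alpha_itv n n_gt0) => /ltW.
have alpha_le M : alpha <= M.+1%:R^-1.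
  have [N a1_ge] := a1_large M.+1.
  rewrite -alphaE; apply: limr_le; first exact: cvgP alpha_cvg.
  near=> n; have n_gt0 : (0 < n)%N by near: n; exact: nbhs_infty_gt.
  apply: le_invSn_of_cf_a1; first by case/andP: (alpha_itv n n_gt0).
  by apply: a1_ge; near: n; exact: nbhs_infty_ge.
apply/eqP; rewrite eq_le alpha_ge0 andbT leNgt; apply/negP => alpha_gt0.
have := alpha_le (Num.truncn alpha^-1); apply/negP; rewrite -ltNge.
by rewrite -[X in _ < X]invrK ltf_pV2 ?posrE ?invr_gt0 ?truncnS_gt.
Unshelve. all: by end_near.
Qed.

End ContinuedFractions.

Theorem lemma3 (R : realType) (alpha_ : nat -> R) (alpha : R) :
  (forall n, (0 < n)%N -> 0 < alpha_ n < 1) ->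
  alpha_ n @[n --> \oo] --> alpha ->
  (forall i : nat, (0 < i)%N ->
     (exists B : nat, forall n, (0 < n)%N ->
         forall k, (1 <= k <= i)%N -> (cf_a (alpha_ n) k <= B)%N) ->
     (~ (exists eps : R, 0 < eps /\
           forall n, (0 < n)%N -> eps <= `|cf_r (alpha_ n) i - 1|)
      \/ ~ (exists M : R, forall n, (0 < n)%N -> cf_r (alpha_ n) i <= M)) ->
     exists j : nat, (j <= i)%N /\
       alpha = cfeval [seq cf_a alpha k | k <- iota 1 j])
  /\
  ((forall M : nat, exists N : nat, forall n, (N <= n)%N -> (M <= cf_a (alpha_ n) 1)%N) ->
   alpha = 0).
Proof.
move=> alpha_itv alpha_cvg; split; last exact: cf_limit_eq0.
by move=> i i_gt0 [B a_le]; exact: (cf_limit_terminates alpha_itv alpha_cvg i_gt0 a_le).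
Qed.
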